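(* Consider the semi-discrete DG scheme described in the context, with zero-flux boundary conditions, and let $(u_h(t),q_h(t))\in V_h\times V_h$ be a (differentiable in $t$) solution on some time interval with $f(u_h)\ge 0$ on $\Omega$. Define the semi-discrete entropy $$E(t)=\sum_{j=1}^N\int_{I_j}\big(\Phi(x)u_h(x,t)+H(u_h(x,t))\big)\,dx .$$ If the flux parameters satisfy $\beta_0>\Gamma(\beta_1)$, where $$\Gamma(\beta_1):=\max_{1\le j\le N-1}\frac{\{f(u_h)\}\left(\{\partial_x q_h\}+\frac{\beta_1}{2}h[\partial_x^2 q_h]\right)^2\Big|_{x_{j+1/2}}}{\frac{1}{2h}\left(\int_{I_j}+\int_{I_{j+1}}\right)f(u_h)|\partial_x q_h|^2\,dx}$$ (with $h$ the interface mesh size at $x_{j+1/2}$ and all denominators assumed positive), then $$\frac{d}{dt}E(t)\le -\gamma\,\|q_h\|_E^2,\qquad \gamma=1-\sqrt{\Gamma(\beta_1)/\beta_0}\in(0,1).$$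
   Context: Let $\Omega=[a,b]$ with mesh $a=x_{1/2}<x_{3/2}<\dots<x_{N+1/2}=b$, cells $I_j=(x_{j-1/2},x_{j+1/2})$, $\Delta x_j=x_{j+1/2}-x_{j-1/2}$; at the interface $x_{j+1/2}$ the mesh size is $h=(\Delta x_j+\Delta x_{j+1})/2$ (on a uniform mesh $h=\Delta x$). For $k\ge 1$, $V_h=\{v\in L^2(\Omega): v|_{I_j}\in P^k(I_j),\ j=1,\dots,N\}$, $P^k$ being polynomials of degree at most $k$. At an interior interface, $v^\pm$ denote right/left limits, $[v]=v^+-v^-$, $\{v\}=(v^++v^-)/2$. Given functions $\Phi:\Omega\to\mathbb R$, $H:(0,\infty)\to\mathbb R$ ($C^1$) and $f\ge 0$, the semi-discrete DG scheme (for $\partial_t u=\partial_x(f(u)\partial_x q)$, $q=\Phi+H'(u)$) with zero-flux boundary conditions is: find $u_h(t),q_h(t)\in V_h$ such that for all $v,r\in V_h$, $$\int_\Omega \partial_t u_h\, v\,dx=-\sum_{j=1}^N\int_{I_j} f(u_h)\partial_x q_h\,\partial_x v\,dx-\sum_{j=1}^{N-1}\{f(u_h)\}\Big(\widehat{\partial_x q_h}\,[v]+\{\partial_x v\}[q_h]\Big)\Big|_{x_{j+1/2}},$$ $$\int_\Omega q_h r\,dx=\int_\Omega(\Phi(x)+H'(u_h))\,r\,dx,$$ with numerical flux at $x_{j+1/2}$: $\widehat{\partial_x q_h}=\beta_0\frac{[q_h]}{h}+\{\partial_x q_h\}+\beta_1 h[\partial_x^2 q_h]$, where $\beta_0,\beta_1$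 are real parameters. The energy norm is $$\|q_h\|_E^2=\sum_{j=1}^N\int_{I_j}f(u_h)|\partial_x q_h|^2dx+\sum_{j=1}^{N-1}\{f(u_h)\}\frac{\beta_0}{h}[q_h]^2\Big|_{x_{j+1/2}}.$$ *)

From Stdlib Require Import Reals Lra ClassicalEpsilon.
Open Scope R_scope.

Fixpoint sumR (n : nat) (F : nat -> R) : R :=
  match n with O => 0 | S m => sumR m F + F (S m) end.

(* max_{j=1}^n F j  (only meaningful for n >= 1) *)
Fixpoint maxR (n : nat) (F : nat -> R) : R :=
  match n with
  | O => 0
  | S O => F 1%nat
  | S m => Rmax (maxR m F) (F n)
  end.

(* Riemann integral of g over [lo,hi] (value chosen when g is integrable) *)
Definition Rint (g : R -> R) (lo hi : R) : R :=
  epsilon (inhabits 0)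
    (fun I => exists pr : Riemann_integrable g lo hi, RiemannInt pr = I).

Definition pev (k : nat) (a : nat -> R) (y : R) : R :=
  sum_f_R0 (fun i => a i * y ^ i) k.
Definition dpev (k : nat) (a : nat -> R) (y : R) : R :=
  sum_f_R0 (fun i => INR i * a i * y ^ (pred i)) k.
Definition d2pev (k : nat) (a : nat -> R) (y : R) : R :=
  sum_f_R0 (fun i => INR i * INR (pred i) * a i * y ^ (i - 2)) k.

(* An element of V_h: c j i = coefficient of y^i of the polynomial on the
   cell I_j = (x (j-1), x j), j = 1..N.  Mesh points x 0 = a < ... < x N = b;
   x j is the interface x_{j+1/2}. *)
Definition Vh := (nat -> nat -> R)%type.

Definition cellint (x : nat -> R) (j : nat) (g : R -> R) : R :=
  Rint g (x (pred j)) (x j).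

Definition meshh (x : nat -> R) (j : nat) : R :=
  ((x j - x (pred j)) + (x (S j) - x j)) / 2.

(* one-sided limits at interface j : minus = from cell j, plus = from cell j+1 *)
Definition vm k x (c : Vh) j := pev k (c j) (x j).
Definition vp k x (c : Vh) j := pev k (c (S j)) (x j).
Definition jmp k x (c : Vh) j := vp k x c j - vm k x c j.
Definition avg k x (c : Vh) j := (vp k x c j + vm k x c j) / 2.
Definition dvm k x (c : Vh) j := dpev k (c j) (x j).
Definition dvp k x (c : Vh) j := dpev k (c (S j)) (x j).
Definition djmp k x (c : Vh) j := dvp k x c j - dvm k x c j.
Definition davg k x (c : Vh) j := (dvp k x c j + dvm k x c j) / 2.
Definition d2jmp k x (c : Vh) j :=
  d2pev k (c (S j)) (x j) - d2pev k (c j) (x j).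

Definition favg (f : R -> R) k x (u : Vh) j :=
  (f (vp k x u j) + f (vm k x u j)) / 2.

Definition flux (b0 b1 : R) k x (q : Vh) j :=
  b0 * jmp k x q j / meshh x j + davg k x q j
  + b1 * meshh x j * d2jmp k x q j.

(* first equation of the scheme; du = coefficients of d/dt u_h *)
Definition scheme_eq1 (N k : nat) (x : nat -> R) (f : R -> R) (b0 b1 : R)
  (du u q : Vh) : Prop :=
  forall v : Vh,
    sumR N (fun j => cellint x j (fun y => pev k (du j) y * pev k (v j) y))
    = - sumR N (fun j => cellint x j
           (fun y => f (pev k (u j) y) * dpev k (q j) y * dpev k (v j) y))
      - sumR (pred N) (fun j => favg f k x u j *
           (flux b0 b1 k x q j * jmp k x v j + davg k x v j * jmp k x q j)).

Definition scheme_eq2 (N k : nat) (x : nat -> R) (Phi Hd : R -> R)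
  (u q : Vh) : Prop :=
  forall r : Vh,
    sumR N (fun j => cellint x j (fun y => pev k (q j) y * pev k (r j) y))
    = sumR N (fun j => cellint x j
           (fun y => (Phi y + Hd (pev k (u j) y)) * pev k (r j) y)).

Definition energy2 (N k : nat) (x : nat -> R) (f : R -> R) (b0 : R)
  (u q : Vh) : R :=
  sumR N (fun j => cellint x j (fun y => f (pev k (u j) y) * (dpev k (q j) y) ^ 2))
  + sumR (pred N) (fun j => favg f k x u j * (b0 / meshh x j) * (jmp k x q j) ^ 2).

Definition gdenom (k : nat) (x : nat -> R) (f : R -> R) (u q : Vh) (j : nat) : R :=
  / (2 * meshh x j) *
  (cellint x j (fun y => f (pev k (u j) y) * Rabs (dpev k (q j) y) ^ 2)
   + cellint x (S j) (fun y => f (pev k (u (S j)) y) * Rabs (dpev k (q (S j)) y) ^ 2)).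

Definition gnum (k : nat) (x : nat -> R) (f : R -> R) (b1 : R) (u q : Vh) (j : nat) : R :=
  favg f k x u j * (davg k x q j + b1 / 2 * meshh x j * d2jmp k x q j) ^ 2.

Definition Gamma (N k : nat) (x : nat -> R) (f : R -> R) (b1 : R) (u q : Vh) : R :=
  maxR (pred N) (fun j => gnum k x f b1 u q j / gdenom k x f u q j).

Definition entropy (N k : nat) (x : nat -> R) (Phi H : R -> R) (u : Vh) : R :=
  sumR N (fun j => cellint x j (fun y => Phi y * pev k (u j) y + H (pev k (u j) y))).

From Stdlib Require Import Reals Lra Lia ClassicalEpsilon FunctionalExtensionality.
From Coquelicot Require Import Coquelicot.
Open Scope R_scope.

(* dE/dt is computed by differentiating under the integral sign (the integrand depends
   smoothly on finitely many coefficients, so the difference quotients converge uniformly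
   on each cell).  Testing the second equation with r = d_t u_h and the first with v = q_h
   turns it into minus the dissipation: the cell integrals of f(u_h)|d_x q_h|^2 plus, at
   each interface, {f}(beta0 [q]^2/h + 2 ({d_x q} + beta1 h [d_xx q]/2) [q]).  By the
   definition of Gamma and Young's inequality with weight c = sqrt(Gamma/beta0), the cross
   term is bounded by c times the penalty term plus c times the mean of the two adjacent cell
   integrals.  Summing over interfaces, every cell integral is used at most once, which
   leaves (1 - c) ||q_h||_E^2. *)

Definition continuous_seg (g : R -> R) (lo hi : R) : Prop :=
  forall y, lo <= y <= hi -> continuity_pt g y.

Lemma continuity_pt_sum_monomials (g : nat -> R) (e : nat -> nat) k y :
  continuity_pt (fun z => sum_f_R0 (fun i => g i * z ^ e i) k) y.
Proof.
  assert (Hmon : forall i, continuity_pt (fun z => g i * z ^ e i) y).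
  { intros i. apply (continuity_pt_mult (fun _ => g i) (fun z => z ^ e i)).
    - apply continuity_pt_const; intros ? ?; reflexivity.
    - apply derivable_continuous_pt, derivable_pt_pow. }
  induction k as [|k IHk]; simpl; [apply Hmon|].
  apply (continuity_pt_plus (fun z => sum_f_R0 (fun i => g i * z ^ e i) k));
    [exact IHk | apply Hmon].
Qed.

Lemma continuity_pt_pev k a y : continuity_pt (pev k a) y.
Proof. apply (continuity_pt_sum_monomials a (fun i => i)). Qed.

Lemma continuity_pt_dpev k a y : continuity_pt (dpev k a) y.
Proof. apply (continuity_pt_sum_monomials (fun i => INR i * a i) pred). Qed.

Lemma continuous_seg_bounded g lo hi : lo <= hi -> continuous_seg g lo hi ->
  exists B, 0 <= B /\ forall y, lo <= y <= hi -> Rabs (g y) <= B.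
Proof.
  intros Hle Hg.
  destruct (continuity_ab_maj (fun y => Rabs (g y)) lo hi Hle) as [yB [HB _]].
  - intros y Hy. apply (continuity_pt_comp g Rabs); [apply Hg, Hy | apply Rcontinuity_abs].
  - exists (Rabs (g yB)); split; [apply Rabs_pos | exact HB].
Qed.

Lemma Rint_RInt g lo hi : lo <= hi -> continuous_seg g lo hi -> Rint g lo hi = RInt g lo hi.
Proof.
  intros Hle Hg. pose proof (continuity_implies_RiemannInt Hle Hg) as pr.
  unfold Rint.
  destruct (epsilon_spec (inhabits 0)
    (fun I => exists pr : Riemann_integrable g lo hi, RiemannInt pr = I)) as [? <-].
  - exists (RiemannInt pr), pr; reflexivity.
  - symmetry; apply RInt_Reals.
Qed.

Lemma ex_RInt_seg g lo hi : lo <= hi -> continuous_seg g lo hi -> ex_RInt g lo hi.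
Proof. intros Hle Hg; apply ex_RInt_Reals_1, (continuity_implies_RiemannInt Hle Hg). Qed.

Lemma Rint_ge0 g lo hi : lo <= hi -> continuous_seg g lo hi ->
  (forall y, lo <= y <= hi -> 0 <= g y) -> 0 <= Rint g lo hi.
Proof.
  intros Hle Hc Hg. rewrite Rint_RInt by auto.
  apply RInt_ge_0; [exact Hle | apply ex_RInt_seg; auto | intros y Hy; apply Hg; lra].
Qed.

Lemma RInt_linear_comb f g l lo hi c :
  ex_RInt f lo hi -> ex_RInt g lo hi -> ex_RInt l lo hi ->
  ex_RInt (fun y => f y - g y - c * l y) lo hi /\
  RInt (fun y => f y - g y - c * l y) lo hi = RInt f lo hi - RInt g lo hi - c * RInt l lo hi.
Proof.
  intros Hf Hg Hl.
  assert (Hi : is_RInt (fun y => minus (minus (f y) (g y)) (scal c (l y))) lo hi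
                 (minus (minus (RInt f lo hi) (RInt g lo hi)) (scal c (RInt l lo hi)))).
  { apply (@is_RInt_minus R_NormedModule);
      [apply (@is_RInt_minus R_NormedModule) | apply (@is_RInt_scal R_NormedModule)];
      apply (@RInt_correct R_CompleteNormedModule); assumption. }
  split; [eexists; exact Hi | apply is_RInt_unique, Hi].
Qed.

Lemma sumR_ext n F G : (forall j, (1 <= j <= n)%nat -> F j = G j) -> sumR n F = sumR n G.
Proof.
  induction n as [|n IHn]; intros HFG; simpl; [reflexivity|].
  rewrite IHn, HFG; [reflexivity | lia | intros j Hj; apply HFG; lia].
Qed.

Lemma sumR_le n F G : (forall j, (1 <= j <= n)%nat -> F j <= G j) -> sumR n F <= sumR n G.
Proof.
  induction n as [|n IHn]; intros HFG; simpl; [lra|].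
  apply Rplus_le_compat; [apply IHn; intros j Hj | ]; apply HFG; lia.
Qed.

Lemma sumR_lin n F G a b :
  sumR n (fun j => a * F j - b * G j) = a * sumR n F - b * sumR n G.
Proof. induction n as [|n IHn]; simpl; [ring | rewrite IHn; ring]. Qed.

Lemma sumR_avg_succ m A :
  sumR m (fun j => (A j + A (S j)) / 2) = sumR (S m) A - (A 1%nat + A (S m)) / 2.
Proof. induction m as [|m IHm]; simpl; [field | rewrite IHm; simpl; field]. Qed.

Lemma derivable_pt_lim_sumR n (F : R -> nat -> R) G t :
  (forall j, (1 <= j <= n)%nat -> derivable_pt_lim (fun s => F s j) t (G j)) ->
  derivable_pt_lim (fun s => sumR n (F s)) t (sumR n G).
Proof.
  induction n as [|n IHn]; intros HF; simpl.
  - apply derivable_pt_lim_const.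
  - apply (derivable_pt_lim_plus (fun s => sumR n (F s)) (fun s => F s (S n)));
      [apply IHn; intros j Hj |]; apply HF; lia.
Qed.

Lemma maxR_ge n F j : (1 <= j <= n)%nat -> F j <= maxR n F.
Proof.
  induction n as [|n IHn]; intros Hj; [lia|].
  destruct n as [|n].
  - replace j with 1%nat by lia. simpl; lra.
  - change (maxR (S (S n)) F) with (Rmax (maxR (S n) F) (F (S (S n)))).
    destruct (Nat.eq_dec j (S (S n))) as [->|Hjn]; [apply Rmax_r|].
    eapply Rle_trans; [apply IHn; lia | apply Rmax_l].
Qed.

Lemma pev_lin k a b c h y :
  pev k a y - pev k b y - h * pev k c y = pev k (fun i => a i - b i - h * c i) y.
Proof. unfold pev; induction k as [|k IHk]; simpl; [ring | rewrite <- IHk; ring]. Qed.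

Lemma sum_f_R0_abs_le (g : nat -> R) n B :
  (forall i, (i <= n)%nat -> Rabs (g i) <= B) -> Rabs (sum_f_R0 g n) <= INR (S n) * B.
Proof.
  intros Hg. eapply Rle_trans; [apply sum_f_R0_triangle|].
  rewrite Rmult_comm, <- sum_cte. apply sum_Rle, Hg.
Qed.

Lemma pev_abs_le k e y E Y :
  (forall i, (i <= k)%nat -> Rabs (e i) <= E) -> Rabs y <= Y -> 1 <= Y ->
  Rabs (pev k e y) <= INR (S k) * (E * Y ^ k).
Proof.
  intros He Hy HY. apply sum_f_R0_abs_le. intros i Hi.
  rewrite Rabs_mult, <- RPow_abs.
  apply Rmult_le_compat; [apply Rabs_pos | apply pow_le, Rabs_pos | auto |].
  apply Rle_trans with (Y ^ i).
  - apply pow_incr; split; [apply Rabs_pos | exact Hy].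
  - apply Rle_pow; assumption.
Qed.

Definition unif_derivable_pt_lim (F : R -> R -> R) (t : R) (G : R -> R) (lo hi : R) : Prop :=
  forall eps, 0 < eps -> exists delta, 0 < delta /\
    forall h, Rabs h < delta -> forall y, lo <= y <= hi ->
      Rabs (F (t + h) y - F t y - h * G y) <= eps * Rabs h.

Lemma derivable_pt_lim_linear_approx g t l eps :
  derivable_pt_lim g t l -> 0 < eps ->
  exists delta, 0 < delta /\
    forall h, Rabs h < delta -> Rabs (g (t + h) - g t - h * l) <= eps * Rabs h.
Proof.
  intros Hg Heps. destruct (Hg eps Heps) as [[delta Hdelta] Hq].
  exists delta; split; [exact Hdelta|]. intros h Hh.
  destruct (Req_dec h 0) as [->|Hh0].
  - rewrite Rplus_0_r, Rabs_R0. replace (g t - g t - 0 * l) with 0 by ring.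
    rewrite Rabs_R0; lra.
  - replace (g (t + h) - g t - h * l) with (h * ((g (t + h) - g t) / h - l)) by (field; auto).
    rewrite Rabs_mult, Rmult_comm.
    apply Rmult_le_compat_r; [apply Rabs_pos | left; apply Hq; auto].
Qed.

Lemma delta_forall_le (k : nat) (P : nat -> R -> Prop) :
  (forall i, (i <= k)%nat -> exists d, 0 < d /\ forall h, Rabs h < d -> P i h) ->
  exists d, 0 < d /\ forall h, Rabs h < d -> forall i, (i <= k)%nat -> P i h.
Proof.
  induction k as [|k IHk]; intros HP.
  - destruct (HP 0%nat (le_n _)) as [d [Hd Hh]]. exists d; split; [exact Hd|].
    intros h Hdh i Hi. replace i with 0%nat by lia. auto.
  - destruct IHk as [d1 [Hd1 H1]]; [intros i Hi; apply HP; lia|].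
    destruct (HP (S k) (le_n _)) as [d2 [Hd2 H2]].
    exists (Rmin d1 d2); split; [apply Rmin_pos; assumption|].
    intros h Hh i Hi.
    destruct (Nat.eq_dec i (S k)) as [->|Hik].
    + apply H2. eapply Rlt_le_trans; [exact Hh | apply Rmin_r].
    + apply H1; [eapply Rlt_le_trans; [exact Hh | apply Rmin_l] | lia].
Qed.

Lemma unif_derivable_pev k (A : R -> nat -> R) dA t lo hi :
  (forall i, (i <= k)%nat -> derivable_pt_lim (fun s => A s i) t (dA i)) ->
  unif_derivable_pt_lim (fun s => pev k (A s)) t (pev k dA) lo hi.
Proof.
  intros HA eps Heps.
  set (Y := Rmax 1 (Rmax (Rabs lo) (Rabs hi))).
  assert (HY : 1 <= Y) by apply Rmax_l.
  set (K := INR (S k) * Y ^ k).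
  assert (HK : 0 < K) by (apply Rmult_lt_0_compat; [apply lt_0_INR; lia | apply pow_lt; lra]).
  destruct (delta_forall_le k
    (fun i h => Rabs (A (t + h) i - A t i - h * dA i) <= eps / K * Rabs h)) as [d [Hd Hcoef]].
  { intros i Hi. apply (derivable_pt_lim_linear_approx (fun s => A s i));
      [apply HA; auto | apply Rdiv_lt_0_compat; auto]. }
  exists d; split; [exact Hd|]. intros h Hh y Hy.
  rewrite pev_lin.
  replace (eps * Rabs h) with (INR (S k) * (eps / K * Rabs h * Y ^ k))
    by (unfold K; field; split; [apply pow_nonzero; lra | apply not_0_INR; lia]).
  apply pev_abs_le; [intros i Hi; apply Hcoef; auto | | exact HY].
  eapply Rle_trans; [apply RmaxAbs; apply Hy | apply Rmax_r].
Qed.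

Lemma unif_derivable_plus F1 F2 G1 G2 t lo hi :
  unif_derivable_pt_lim F1 t G1 lo hi -> unif_derivable_pt_lim F2 t G2 lo hi ->
  unif_derivable_pt_lim (fun s y => F1 s y + F2 s y) t (fun y => G1 y + G2 y) lo hi.
Proof.
  intros H1 H2 eps Heps.
  destruct (H1 (eps / 2)) as [d1 [Hd1 E1]]; [lra|].
  destruct (H2 (eps / 2)) as [d2 [Hd2 E2]]; [lra|].
  exists (Rmin d1 d2); split; [apply Rmin_pos; assumption|]. intros h Hh y Hy.
  specialize (E1 h (Rlt_le_trans _ _ _ Hh (Rmin_l _ _)) y Hy).
  specialize (E2 h (Rlt_le_trans _ _ _ Hh (Rmin_r _ _)) y Hy).
  replace (F1 (t + h) y + F2 (t + h) y - (F1 t y + F2 t y) - h * (G1 y + G2 y))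
    with ((F1 (t + h) y - F1 t y - h * G1 y) + (F2 (t + h) y - F2 t y - h * G2 y)) by ring.
  eapply Rle_trans; [apply Rabs_triang | lra].
Qed.

Lemma unif_derivable_scal Phi B F G t lo hi :
  0 <= B -> (forall y, lo <= y <= hi -> Rabs (Phi y) <= B) ->
  unif_derivable_pt_lim F t G lo hi ->
  unif_derivable_pt_lim (fun s y => Phi y * F s y) t (fun y => Phi y * G y) lo hi.
Proof.
  intros HB HPhi HF eps Heps.
  set (e := eps / (B + 1)).
  assert (He : 0 < e) by (apply Rdiv_lt_0_compat; lra).
  destruct (HF e He) as [d [Hd E]].
  exists d; split; [exact Hd|]. intros h Hh y Hy.
  replace (Phi y * F (t + h) y - Phi y * F t y - h * (Phi y * G y))
    with (Phi y * (F (t + h) y - F t y - h * G y)) by ring.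
  rewrite Rabs_mult.
  apply Rle_trans with (B * (e * Rabs h)).
  - apply Rmult_le_compat; [apply Rabs_pos | apply Rabs_pos | auto | auto].
  - replace eps with (e * (B + 1)) by (unfold e; field; lra).
    pose proof (Rabs_pos h). nra.
Qed.

Lemma unif_derivable_lipschitz F G C t lo hi :
  (forall y, lo <= y <= hi -> Rabs (G y) <= C) ->
  unif_derivable_pt_lim F t G lo hi ->
  exists delta, 0 < delta /\ forall h, Rabs h < delta -> forall y, lo <= y <= hi ->
    Rabs (F (t + h) y - F t y) <= (C + 1) * Rabs h.
Proof.
  intros HG HF. destruct (HF 1 Rlt_0_1) as [d [Hd E]].
  exists d; split; [exact Hd|]. intros h Hh y Hy.
  specialize (E h Hh y Hy). specialize (HG y Hy).
  replace (F (t + h) y - F t y) with ((F (t + h) y - F t y - h * G y) + h * G y) by ring.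
  eapply Rle_trans; [apply Rabs_triang|]. rewrite Rabs_mult.
  assert (Rabs h * Rabs (G y) <= Rabs h * C)
    by (apply Rmult_le_compat_l; [apply Rabs_pos | exact HG]).
  lra.
Qed.

Lemma unif_derivable_pos_near F G C m t lo hi :
  0 <= C -> 0 < m ->
  (forall y, lo <= y <= hi -> Rabs (G y) <= C) ->
  (forall y, lo <= y <= hi -> m <= F t y) ->
  unif_derivable_pt_lim F t G lo hi ->
  exists delta, 0 < delta /\ forall h, Rabs h < delta -> forall y, lo <= y <= hi -> 0 < F (t + h) y.
Proof.
  intros HC Hm HG HF HFu.
  destruct (unif_derivable_lipschitz F G C t lo hi HG HFu) as [d [Hd Hlip]].
  exists (Rmin d (m / (C + 1))).
  split; [apply Rmin_pos; [exact Hd | apply Rdiv_lt_0_compat; lra]|].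
  intros h Hh y Hy.
  assert (Hsmall : (C + 1) * Rabs h < m).
  { replace m with ((C + 1) * (m / (C + 1))) by (field; lra).
    apply Rmult_lt_compat_l; [lra | eapply Rlt_le_trans; [exact Hh | apply Rmin_r]]. }
  pose proof (Hlip h (Rlt_le_trans _ _ _ Hh (Rmin_l _ _)) y Hy).
  pose proof (HF y Hy).
  assert (Hclose : Rabs (F (t + h) y - F t y) < m) by lra.
  apply Rabs_def2 in Hclose. lra.
Qed.

Lemma mvt_linear_approx H Hd p d e :
  (forall z, Rabs (z - p) <= Rabs d -> derivable_pt_lim H z (Hd z) /\ Rabs (Hd z - Hd p) <= e) ->
  Rabs (H (p + d) - H p - Hd p * d) <= e * Rabs d.
Proof.
  intros HH.
  assert (Hbetween : forall z, Rmin p (p + d) <= z <= Rmax p (p + d) -> Rabs (z - p) <= Rabs d).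
  { intros z Hz. unfold Rmin, Rmax in Hz.
    destruct (Rle_dec p (p + d)); split_Rabs; lra. }
  (* Mean value theorem for [z |-> H z - Hd p * z], whose derivative [Hd z - Hd p] is small. *)
  destruct (MVT_abs (fun z => H z - Hd p * z) (fun z => Hd z - Hd p) p (p + d)) as [c [Hc Hcp]].
  { intros z Hz. apply (derivable_pt_lim_minus H (fun z => Hd p * z)); [apply HH; auto|].
    pose proof (derivable_pt_lim_scal (fun z => z) (Hd p) z 1 (derivable_pt_lim_id z)) as Hl.
    rewrite Rmult_1_r in Hl. exact Hl. }
  replace (H (p + d) - H p - Hd p * d) with (H (p + d) - Hd p * (p + d) - (H p - Hd p * p)) by ring.
  rewrite Hc. replace (p + d - p) with d by ring.
  apply Rmult_le_compat_r; [apply Rabs_pos | apply HH; auto].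
Qed.

Lemma uniform_linear_approx H Hd m M r e :
  0 < r -> 0 < e ->
  (forall z, m - r <= z <= M + r -> derivable_pt_lim H z (Hd z) /\ continuity_pt Hd z) ->
  exists delta, 0 < delta /\ forall p d, m <= p <= M -> Rabs d < delta ->
    Rabs (H (p + d) - H p - Hd p * d) <= e * Rabs d.
Proof.
  intros Hr He HH.
  destruct (Heine Hd (fun z => m - r <= z <= M + r) (compact_P3 _ _)
              (fun z Hz => proj2 (HH z Hz)) (mkposreal e He)) as [[dl Hdl] Hunif].
  simpl in Hunif.
  exists (Rmin r dl); split; [apply Rmin_pos; assumption|].
  intros p d Hp Hdsmall. pose proof (Rmin_l r dl). pose proof (Rmin_r r dl).
  apply mvt_linear_approx. intros z Hz.
  assert (Hzp : Rabs (z - p) < Rmin r dl) by lra.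
  apply Rabs_def2 in Hzp.
  split; [apply HH; lra | left; apply Hunif; [lra | lra | apply Rabs_def1; lra]].
Qed.

Lemma unif_derivable_comp H Hd P P' C m M r t lo hi :
  m <= M -> 0 < r -> 0 <= C ->
  (forall z, m - r <= z <= M + r -> derivable_pt_lim H z (Hd z) /\ continuity_pt Hd z) ->
  (forall y, lo <= y <= hi -> m <= P t y <= M) ->
  (forall y, lo <= y <= hi -> Rabs (P' y) <= C) ->
  unif_derivable_pt_lim P t P' lo hi ->
  unif_derivable_pt_lim (fun s y => H (P s y)) t (fun y => Hd (P t y) * P' y) lo hi.
Proof.
  intros HmM Hr HC HH HP HP' HPu eps Heps.
  destruct (continuous_seg_bounded Hd (m - r) (M + r)) as [B [HB0 HB]];
    [lra | intros z Hz; apply HH, Hz |].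
  destruct (uniform_linear_approx H Hd m M r (eps / (2 * (C + 1)))) as [dl [Hdl HHlin]];
    [exact Hr | apply Rdiv_lt_0_compat; lra | exact HH |].
  destruct (HPu (eps / (2 * (B + 1)))) as [d1 [Hd1 HPlin]]; [apply Rdiv_lt_0_compat; lra|].
  destruct (unif_derivable_lipschitz P P' C t lo hi HP' HPu) as [d2 [Hd2 HPlip]].
  exists (Rmin d1 (Rmin d2 (dl / (C + 1)))).
  split; [repeat apply Rmin_pos; try apply Rdiv_lt_0_compat; lra|].
  intros h Hh y Hy.
  pose proof (Rmin_l d1 (Rmin d2 (dl / (C + 1)))).
  pose proof (Rmin_r d1 (Rmin d2 (dl / (C + 1)))).
  pose proof (Rmin_l d2 (dl / (C + 1))). pose proof (Rmin_r d2 (dl / (C + 1))).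
  assert (HD : Rabs (P (t + h) y - P t y) <= (C + 1) * Rabs h) by (apply HPlip; [lra | exact Hy]).
  assert (HDsmall : Rabs (P (t + h) y - P t y) < dl).
  { apply Rle_lt_trans with ((C + 1) * Rabs h); [exact HD|].
    replace dl with ((C + 1) * (dl / (C + 1))) by (field; lra).
    apply Rmult_lt_compat_l; lra. }
  pose proof (HHlin (P t y) _ (HP y Hy) HDsmall) as HHp.
  pose proof (HPlin h ltac:(lra) y Hy) as HPh.
  assert (HHdp : Rabs (Hd (P t y)) <= B) by (apply HB; pose proof (HP y Hy); lra).
  replace (P (t + h) y) with (P t y + (P (t + h) y - P t y)) at 1 by ring.
  replace (H (P t y + (P (t + h) y - P t y)) - H (P t y) - h * (Hd (P t y) * P' y))
    with ((H (P t y + (P (t + h) y - P t y)) - H (P t y) - Hd (P t y) * (P (t + h) y - P t y))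
          + Hd (P t y) * (P (t + h) y - P t y - h * P' y)) by ring.
  eapply Rle_trans; [apply Rabs_triang|]. rewrite Rabs_mult.
  assert (Hfirst : eps / (2 * (C + 1)) * Rabs (P (t + h) y - P t y) <= eps / 2 * Rabs h).
  { apply Rle_trans with (eps / (2 * (C + 1)) * ((C + 1) * Rabs h));
      [apply Rmult_le_compat_l; [left; apply Rdiv_lt_0_compat|]; lra |].
    right. field. lra. }
  assert (Hsecond :
    Rabs (Hd (P t y)) * Rabs (P (t + h) y - P t y - h * P' y) <= eps / 2 * Rabs h).
  { apply Rle_trans with (B * (eps / (2 * (B + 1)) * Rabs h));
      [apply Rmult_le_compat; [apply Rabs_pos | apply Rabs_pos | exact HHdp | exact HPh]|].
    replace (eps / 2) with ((B + 1) * (eps / (2 * (B + 1)))) by (field; lra).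
    assert (0 <= eps / (2 * (B + 1)) * Rabs h)
      by (apply Rmult_le_pos; [left; apply Rdiv_lt_0_compat; lra | apply Rabs_pos]).
    nra. }
  lra.
Qed.

Lemma derivable_pt_lim_Rint F G t lo hi :
  lo <= hi ->
  (exists d, 0 < d /\ forall h, Rabs h < d -> continuous_seg (F (t + h)) lo hi) ->
  continuous_seg G lo hi ->
  unif_derivable_pt_lim F t G lo hi ->
  derivable_pt_lim (fun s => Rint (F s) lo hi) t (Rint G lo hi).
Proof.
  intros Hle [d [Hd HF]] HG HFG eps Heps.
  assert (HFt : continuous_seg (F t) lo hi).
  { rewrite <- (Rplus_0_r t). apply HF. rewrite Rabs_R0; exact Hd. }
  set (e := eps / (2 * (hi - lo + 1))).
  assert (He : 0 < e) by (apply Rdiv_lt_0_compat; lra).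
  destruct (HFG e He) as [d' [Hd' Happrox]].
  exists (mkposreal _ (Rmin_pos _ _ Hd Hd')). simpl. intros h Hh0 Hh.
  assert (Hhd : Rabs h < d) by (eapply Rlt_le_trans; [exact Hh | apply Rmin_l]).
  assert (Hhd' : Rabs h < d') by (eapply Rlt_le_trans; [exact Hh | apply Rmin_r]).
  assert (Habs : 0 < Rabs h) by (apply Rabs_pos_lt, Hh0).
  rewrite !Rint_RInt by auto.
  destruct (RInt_linear_comb (F (t + h)) (F t) G lo hi h) as [Hex Hlin];
    try (apply ex_RInt_seg; auto).
  replace ((RInt (F (t + h)) lo hi - RInt (F t) lo hi) / h - RInt G lo hi)
    with ((RInt (F (t + h)) lo hi - RInt (F t) lo hi - h * RInt G lo hi) / h) by (field; auto).
  rewrite <- Hlin, Rabs_div by exact Hh0.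
  pose proof (abs_RInt_le_const _ lo hi _ Hle Hex (fun y Hy => Happrox h Hhd' y Hy)) as Hbound.
  apply Rle_lt_trans with ((hi - lo) * (e * Rabs h) / Rabs h).
  - unfold Rdiv. apply Rmult_le_compat_r; [left; apply Rinv_0_lt_compat, Habs | exact Hbound].
  - replace ((hi - lo) * (e * Rabs h) / Rabs h) with ((hi - lo) * e) by (field; lra).
    unfold e. apply Rle_lt_trans with (eps / 2); [|lra].
    replace (eps / 2) with ((hi - lo + 1) * (eps / (2 * (hi - lo + 1)))) by (field; lra).
    apply Rmult_le_compat_r; [left; exact He | lra].
Qed.

Lemma cell_entropy_derivable k lo hi t Phi H Hd (A : R -> nat -> R) dA :
  lo <= hi -> continuous_seg Phi lo hi ->
  (forall y, 0 < y -> derivable_pt_lim H y (Hd y)) ->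
  (forall y, 0 < y -> continuity_pt Hd y) ->
  (forall i, (i <= k)%nat -> derivable_pt_lim (fun s => A s i) t (dA i)) ->
  (forall y, lo <= y <= hi -> 0 < pev k (A t) y) ->
  derivable_pt_lim (fun s => Rint (fun y => Phi y * pev k (A s) y + H (pev k (A s) y)) lo hi) t
    (Rint (fun y => (Phi y + Hd (pev k (A t) y)) * pev k dA y) lo hi).
Proof.
  intros Hle HPhi HH HHd HA Hpos.
  set (P := fun s => pev k (A s)).
  destruct (continuity_ab_min (P t) lo hi Hle (fun y _ => continuity_pt_pev k (A t) y))
    as [ym [Hmin Hym]].
  destruct (continuity_ab_maj (P t) lo hi Hle (fun y _ => continuity_pt_pev k (A t) y))
    as [yM [Hmax HyM]].
  set (m := P t ym). set (M := P t yM).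
  assert (Hm : 0 < m) by (apply Hpos, Hym).
  destruct (continuous_seg_bounded Phi lo hi Hle HPhi) as [BPhi [HBPhi0 HBPhi]].
  destruct (continuous_seg_bounded (pev k dA) lo hi Hle (fun y _ => continuity_pt_pev k dA y))
    as [C [HC0 HC]].
  assert (HPu : unif_derivable_pt_lim P t (pev k dA) lo hi) by (apply unif_derivable_pev, HA).
  assert (Hcont : forall s, (forall y, lo <= y <= hi -> 0 < P s y) ->
            continuous_seg (fun y => Phi y * P s y + H (P s y)) lo hi).
  { intros s Hs y Hy.
    apply (continuity_pt_plus (fun y => Phi y * P s y)).
    - apply (continuity_pt_mult Phi); [apply HPhi, Hy | apply continuity_pt_pev].
    - apply (continuity_pt_comp (P s) H); [apply continuity_pt_pev|].
      apply derivable_continuous_pt. exists (Hd (P s y)). apply HH, Hs, Hy. }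
  replace (fun y => (Phi y + Hd (pev k (A t) y)) * pev k dA y)
    with (fun y => Phi y * pev k dA y + Hd (P t y) * pev k dA y)
    by (apply functional_extensionality; intros y; unfold P; ring).
  apply (derivable_pt_lim_Rint (fun s y => Phi y * P s y + H (P s y))); [exact Hle | | |].
  - destruct (unif_derivable_pos_near P (pev k dA) C m t lo hi) as [d [Hdpos Hnear]];
      [exact HC0 | exact Hm | exact HC | exact Hmin | exact HPu |].
    exists d; split; [exact Hdpos|]. intros h Hh. apply Hcont, Hnear, Hh.
  - intros y Hy. apply (continuity_pt_plus (fun y => Phi y * pev k dA y)).
    + apply (continuity_pt_mult Phi); [apply HPhi, Hy | apply continuity_pt_pev].
    + apply (continuity_pt_mult (fun y => Hd (P t y))); [|apply continuity_pt_pev].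
      apply (continuity_pt_comp (P t) Hd); [apply continuity_pt_pev | apply HHd, Hpos, Hy].
  - apply unif_derivable_plus.
    + apply (unif_derivable_scal Phi BPhi); assumption.
    + apply (unif_derivable_comp H Hd P (pev k dA) C m M (m / 2)); try assumption.
      * apply Hmin, HyM.
      * lra.
      * intros z Hz. split; [apply HH | apply HHd]; lra.
      * intros y Hy. split; [apply Hmin | apply Hmax]; exact Hy.
Qed.

Lemma mesh_le (x : nat -> R) N : (forall j, (j < N)%nat -> x j < x (S j)) ->
  forall i j, (i <= j <= N)%nat -> x i <= x j.
Proof.
  intros Hinc i j Hij. induction j as [|j IHj]; [replace i with 0%nat by lia; lra|].
  destruct (Nat.eq_dec i (S j)) as [->|Hij']; [lra|].
  pose proof (Hinc j ltac:(lia)). pose proof (IHj ltac:(lia)). lra.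
Qed.

Lemma cell_lt (x : nat -> R) N : (forall j, (j < N)%nat -> x j < x (S j)) ->
  forall j, (1 <= j <= N)%nat -> x (pred j) < x j.
Proof. intros Hinc j Hj. replace j with (S (pred j)) at 2 by lia. apply Hinc; lia. Qed.

Lemma meshh_pos (x : nat -> R) N : (forall j, (j < N)%nat -> x j < x (S j)) ->
  forall j, (1 <= j <= pred N)%nat -> 0 < meshh x j.
Proof.
  intros Hinc j Hj. unfold meshh.
  pose proof (cell_lt x N Hinc j ltac:(lia)). pose proof (Hinc j ltac:(lia)). lra.
Qed.

Lemma entropy_derivable N k x Phi H Hd (U : R -> Vh) dU t :
  (forall j, (j < N)%nat -> x j < x (S j)) ->
  (forall y, x 0%nat <= y <= x N -> continuity_pt Phi y) ->
  (forall y, 0 < y -> derivable_pt_lim H y (Hd y)) ->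
  (forall y, 0 < y -> continuity_pt Hd y) ->
  (forall j i, (1 <= j <= N)%nat -> (i <= k)%nat ->
     derivable_pt_lim (fun s => U s j i) t (dU j i)) ->
  (forall j, (1 <= j <= N)%nat -> forall y, x (pred j) <= y <= x j -> 0 < pev k (U t j) y) ->
  derivable_pt_lim (fun s => entropy N k x Phi H (U s)) t
    (sumR N (fun j => cellint x j (fun y => (Phi y + Hd (pev k (U t j) y)) * pev k (dU j) y))).
Proof.
  intros Hinc HPhi HH HHd HU Hpos.
  apply (derivable_pt_lim_sumR N
    (fun s j => cellint x j (fun y => Phi y * pev k (U s j) y + H (pev k (U s j) y)))).
  intros j Hj. apply cell_entropy_derivable; auto.
  - left; apply (cell_lt x N); auto.
  - intros y Hy. apply HPhi. split.
    + apply Rle_trans with (x (pred j)); [apply (mesh_le x N); auto; lia | apply Hy].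
    + apply Rle_trans with (x j); [apply Hy | apply (mesh_le x N); auto; lia].
Qed.

Definition cell_energy k x f (u q : Vh) j : R :=
  cellint x j (fun y => f (pev k (u j) y) * dpev k (q j) y ^ 2).

Definition jump_energy k x f b0 (u q : Vh) j : R :=
  favg f k x u j * (b0 / meshh x j) * jmp k x q j ^ 2.

Definition dissipation N k x f b0 b1 (u q : Vh) : R :=
  sumR N (cell_energy k x f u q)
  + sumR (pred N) (fun j => favg f k x u j *
      (flux b0 b1 k x q j * jmp k x q j + davg k x q j * jmp k x q j)).

Lemma energy2_split N k x f b0 (u q : Vh) :
  energy2 N k x f b0 u q
  = sumR N (cell_energy k x f u q) + sumR (pred N) (jump_energy k x f b0 u q).
Proof. reflexivity. Qed.

Lemma entropy_rate_eq N k x Phi Hd f b0 b1 (du u q : Vh) :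
  scheme_eq1 N k x f b0 b1 du u q -> scheme_eq2 N k x Phi Hd u q ->
  sumR N (fun j => cellint x j (fun y => (Phi y + Hd (pev k (u j) y)) * pev k (du j) y))
  = - dissipation N k x f b0 b1 u q.
Proof.
  intros Heq1 Heq2. rewrite <- (Heq2 du).
  transitivity (sumR N (fun j => cellint x j (fun y => pev k (du j) y * pev k (q j) y))).
  { apply sumR_ext; intros j _. unfold cellint. f_equal.
    apply functional_extensionality; intros y; ring. }
  rewrite (Heq1 q). unfold dissipation.
  replace (sumR N (cell_energy k x f u q)) with
    (sumR N (fun j =>
       cellint x j (fun y => f (pev k (u j) y) * dpev k (q j) y * dpev k (q j) y))); [ring|].
  apply sumR_ext; intros j _. unfold cell_energy, cellint. f_equal.
  apply functional_extensionality; intros y; ring.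
Qed.

(* Young's inequality with weight [c]: multiplied by [c b0 hh], the claim becomes
   [F (c b0 J + hh B)^2 + hh^2 (c^2 b0 D - F B^2) >= 0]. *)
Lemma young_interface F hh b0 c D B J :
  0 <= F -> 0 < hh -> 0 < b0 -> 0 <= c -> 0 <= D -> F * B ^ 2 <= c ^ 2 * b0 * D ->
  0 <= c * (F * (b0 / hh) * J ^ 2) + 2 * (F * B * J) + c * (hh * D).
Proof.
  intros HF Hh Hb Hc HD HFB.
  destruct (Req_dec c 0) as [->|Hc0].
  - assert (HFB0 : (F * B) ^ 2 = 0).
    { replace ((F * B) ^ 2) with (F * (F * B ^ 2)) by ring.
      assert (0 <= F * B ^ 2) by (apply Rmult_le_pos; [exact HF | apply pow2_ge_0]). nra. }
    assert (HFB1 : F * B = 0) by nra.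
    rewrite HFB1. lra.
  - assert (Hpos : 0 < c * b0 * hh) by (apply Rmult_lt_0_compat; [apply Rmult_lt_0_compat|]; lra).
    apply (Rmult_le_reg_l (c * b0 * hh)); [exact Hpos|]. rewrite Rmult_0_r.
    replace (c * b0 * hh * (c * (F * (b0 / hh) * J ^ 2) + 2 * (F * B * J) + c * (hh * D)))
      with (F * (c * b0 * J + hh * B) ^ 2 + hh ^ 2 * (c ^ 2 * b0 * D - F * B ^ 2))
      by (field; lra).
    apply Rplus_le_le_0_compat; apply Rmult_le_pos; try apply pow2_ge_0; lra.
Qed.

Lemma gdenom_cell_energy k x f (u q : Vh) j :
  gdenom k x f u q j
  = / (2 * meshh x j) * (cell_energy k x f u q j + cell_energy k x f u q (S j)).
Proof.
  unfold gdenom, cell_energy, cellint.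
  do 3 f_equal; apply functional_extensionality; intros y; rewrite pow2_abs; reflexivity.
Qed.

Lemma interface_term_ge k x f b0 b1 (u q : Vh) G j :
  0 <= favg f k x u j -> 0 < meshh x j -> 0 < b0 -> 0 <= G ->
  0 < gdenom k x f u q j -> gnum k x f b1 u q j / gdenom k x f u q j <= G ->
  (1 - sqrt (G / b0)) * jump_energy k x f b0 u q j
    - sqrt (G / b0) * ((cell_energy k x f u q j + cell_energy k x f u q (S j)) / 2)
  <= favg f k x u j * (flux b0 b1 k x q j * jmp k x q j + davg k x q j * jmp k x q j).
Proof.
  intros HF Hh Hb HG HD Hratio.
  rewrite gdenom_cell_energy in HD, Hratio.
  set (c := sqrt (G / b0)).
  set (D := / (2 * meshh x j) * (cell_energy k x f u q j + cell_energy k x f u q (S j))).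
  set (hh := meshh x j). set (F := favg f k x u j). set (J := jmp k x q j).
  set (B := davg k x q j + b1 / 2 * hh * d2jmp k x q j).
  fold D in HD, Hratio. fold hh in Hh. fold F in HF.
  assert (Hc2 : c ^ 2 = G / b0) by (apply pow2_sqrt, Rdiv_le_0_compat; lra).
  assert (HFB : F * B ^ 2 <= c ^ 2 * b0 * D).
  { rewrite Hc2. replace (G / b0 * b0 * D) with (G * D) by (field; lra).
    apply (Rmult_le_reg_r (/ D)); [apply Rinv_0_lt_compat, HD|].
    replace (G * D * / D) with G by (field; lra). exact Hratio. }
  assert (Hcells : (cell_energy k x f u q j + cell_energy k x f u q (S j)) / 2 = hh * D).
  { unfold D. fold hh. field; lra. }
  pose proof (young_interface F hh b0 c D B J HF Hh Hb (sqrt_pos _) (Rlt_le _ _ HD) HFB).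
  rewrite Hcells. unfold jump_energy, flux. fold hh F J.
  replace (F * ((b0 * J / hh + davg k x q j + b1 * hh * d2jmp k x q j) * J + davg k x q j * J))
    with (F * (b0 / hh) * J ^ 2 + 2 * (F * B * J)) by (unfold B; field; lra).
  lra.
Qed.

Lemma dissipation_ge N k x f b0 b1 (u q : Vh) G :
  (2 <= N)%nat -> 0 < b0 -> 0 <= G ->
  (forall j, (1 <= j <= pred N)%nat -> 0 <= favg f k x u j) ->
  (forall j, (1 <= j <= pred N)%nat -> 0 < meshh x j) ->
  (forall j, (1 <= j <= pred N)%nat -> 0 < gdenom k x f u q j) ->
  (forall j, (1 <= j <= pred N)%nat -> gnum k x f b1 u q j / gdenom k x f u q j <= G) ->
  0 <= cell_energy k x f u q 1 -> 0 <= cell_energy k x f u q N ->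
  (1 - sqrt (G / b0)) * energy2 N k x f b0 u q <= dissipation N k x f b0 b1 u q.
Proof.
  intros HN Hb HG HF Hh HD Hratio HE1 HEN.
  set (c := sqrt (G / b0)).
  assert (Hc : 0 <= c) by apply sqrt_pos.
  assert (Hsum := sumR_le (pred N) _ _ (fun j Hj =>
    interface_term_ge k x f b0 b1 u q G j (HF j Hj) (Hh j Hj) Hb HG (HD j Hj) (Hratio j Hj))).
  rewrite sumR_lin, sumR_avg_succ in Hsum. replace (S (pred N)) with N in Hsum by lia.
  (* Each cell integral is charged by at most its two interfaces, with weight 1/2 each. *)
  assert (0 <= c * ((cell_energy k x f u q 1 + cell_energy k x f u q N) / 2)) by
    (apply Rmult_le_pos; lra).
  rewrite energy2_split. unfold dissipation. fold c in Hsum. lra.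
Qed.

Definition admissible_state N k (x : nat -> R) (f : R -> R) (u : Vh) : Prop :=
  forall j, (1 <= j <= N)%nat -> forall y, x (pred j) <= y <= x j ->
    0 < pev k (u j) y /\ 0 <= f (pev k (u j) y).

Lemma favg_nonneg N k x f (u : Vh) j :
  (forall j, (j < N)%nat -> x j < x (S j)) -> admissible_state N k x f u ->
  (1 <= j <= pred N)%nat -> 0 <= favg f k x u j.
Proof.
  intros Hinc Hu Hj. unfold favg, vp, vm.
  pose proof (mesh_le x N Hinc (pred j) j ltac:(lia)).
  pose proof (mesh_le x N Hinc j (S j) ltac:(lia)).
  destruct (Hu (S j) ltac:(lia) (x j)) as [_ Hright]; [simpl; lra|].
  destruct (Hu j ltac:(lia) (x j)) as [_ Hleft]; [lra|].
  lra.
Qed.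

Lemma cell_energy_nonneg N k x f (u q : Vh) j :
  (forall j, (j < N)%nat -> x j < x (S j)) -> (forall y, 0 < y -> continuity_pt f y) ->
  admissible_state N k x f u -> (1 <= j <= N)%nat -> 0 <= cell_energy k x f u q j.
Proof.
  intros Hinc Hf Hu Hj. unfold cell_energy, cellint.
  pose proof (cell_lt x N Hinc j Hj).
  apply Rint_ge0; [lra | intros y Hy |].
  - apply (continuity_pt_mult (fun y => f (pev k (u j) y)) (fun y => dpev k (q j) y ^ 2)).
    + apply (continuity_pt_comp (pev k (u j)) f);
        [apply continuity_pt_pev | apply Hf, (Hu j Hj y Hy)].
    + apply (continuity_pt_comp (dpev k (q j)) (fun w => w ^ 2));
        [apply continuity_pt_dpev | apply derivable_continuous_pt, derivable_pt_pow].
  - intros y Hy. apply Rmult_le_pos; [apply (Hu j Hj y Hy) | apply pow2_ge_0].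
Qed.

Lemma Gamma_ge N k x f b1 (u q : Vh) j :
  (1 <= j <= pred N)%nat -> gnum k x f b1 u q j / gdenom k x f u q j <= Gamma N k x f b1 u q.
Proof. apply (maxR_ge (pred N) (fun j => gnum k x f b1 u q j / gdenom k x f u q j)). Qed.

Lemma Gamma_nonneg N k x f b1 (u q : Vh) :
  (2 <= N)%nat -> 0 <= favg f k x u 1 -> 0 < gdenom k x f u q 1 -> 0 <= Gamma N k x f b1 u q.
Proof.
  intros HN HF HD. apply Rle_trans with (gnum k x f b1 u q 1 / gdenom k x f u q 1).
  - apply Rdiv_le_0_compat; [apply Rmult_le_pos; [exact HF | apply pow2_ge_0] | exact HD].
  - apply Gamma_ge; lia.
Qed.

Lemma one_minus_sqrt_div_bounds G b0 : 0 <= G < b0 -> 0 < 1 - sqrt (G / b0) <= 1.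
Proof.
  intros HG. pose proof (sqrt_pos (G / b0)).
  assert (Hlt : sqrt (G / b0) < 1).
  { rewrite <- sqrt_1. apply sqrt_lt_1_alt. split; [apply Rdiv_le_0_compat; lra|].
    apply (Rmult_lt_reg_r b0); [lra|]. unfold Rdiv. rewrite Rmult_assoc, Rinv_l; lra. }
  lra.
Qed.

Theorem theorem3p1
  (a b : R) (N k : nat) (x : nat -> R)
  (Phi f H Hd : R -> R) (b0 b1 T0 T1 : R) (U dU Q : R -> Vh) :
  (1 <= k)%nat -> (2 <= N)%nat ->
  x 0%nat = a -> x N = b -> (forall j, (j < N)%nat -> x j < x (S j)) ->
  (forall y, a <= y <= b -> continuity_pt Phi y) ->
  (forall y, 0 < y -> continuity_pt f y) ->
  (forall y, 0 < y -> derivable_pt_lim H y (Hd y)) ->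
  (forall y, 0 < y -> continuity_pt Hd y) ->
  T0 < T1 ->
  (forall t, T0 < t < T1 -> forall j i, (1 <= j <= N)%nat -> (i <= k)%nat ->
     derivable_pt_lim (fun s => U s j i) t (dU t j i)) ->
  (forall t, T0 < t < T1 -> forall j, (1 <= j <= N)%nat ->
     forall y, x (pred j) <= y <= x j ->
       0 < pev k (U t j) y /\ 0 <= f (pev k (U t j) y)) ->
  (forall t, T0 < t < T1 -> scheme_eq1 N k x f b0 b1 (dU t) (U t) (Q t)) ->
  (forall t, T0 < t < T1 -> scheme_eq2 N k x Phi Hd (U t) (Q t)) ->
  (forall t, T0 < t < T1 -> forall j, (1 <= j <= pred N)%nat ->
     0 < gdenom k x f (U t) (Q t) j) ->
  forall t, T0 < t < T1 ->
    Gamma N k x f b1 (U t) (Q t) < b0 ->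
    let gamma := 1 - sqrt (Gamma N k x f b1 (U t) (Q t) / b0) in
    0 < gamma <= 1 /\
    exists l, derivable_pt_lim (fun s => entropy N k x Phi H (U s)) t l /\
      l <= - gamma * energy2 N k x f b0 (U t) (Q t).
Proof.
  intros _ HN Hx0 HxN Hinc HPhi Hf HH HHd _ HdU HU Heq1 Heq2 Hgd t Ht HG gamma.
  subst a b.
  assert (Hu : admissible_state N k x f (U t)) by exact (HU t Ht).
  assert (HF : forall j, (1 <= j <= pred N)%nat -> 0 <= favg f k x (U t) j)
    by (intros j; apply (favg_nonneg N); assumption).
  assert (HG0 : 0 <= Gamma N k x f b1 (U t) (Q t))
    by (apply Gamma_nonneg; [| apply HF | apply Hgd]; auto; lia).
  split; [apply one_minus_sqrt_div_bounds; lra|].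
  exists (- dissipation N k x f b0 b1 (U t) (Q t)). split.
  - rewrite <- (entropy_rate_eq N k x Phi Hd f b0 b1 (dU t)) by auto.
    apply entropy_derivable; auto. intros j Hj y Hy; apply Hu; assumption.
  - enough (gamma * energy2 N k x f b0 (U t) (Q t) <= dissipation N k x f b0 b1 (U t) (Q t))
      by lra.
    apply dissipation_ge; auto; try lra.
    + apply (meshh_pos x N Hinc).
    + intros j Hj; apply Gamma_ge, Hj.
    + apply (cell_energy_nonneg N); auto; lia.
    + apply (cell_energy_nonneg N); auto; lia.
Qed.
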